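(* Let $\mathbb{F}$ be a field of characteristic $>3$. Then $\mathfrak{sl}_2(\mathbb{F})$ has a COD, and this COD is unique up to conjugacy, if and only if $\mathbb{F}$ contains a primitive fourth root of unity.
   Context: $\mathfrak{sl}_n(\mathbb{F})$ denotes the Lie algebra of $n\times n$ traceless matrices over $\mathbb{F}$. A Cartan subalgebra is a nilpotent self-normalizing subalgebra. A classical Cartan subalgebra of $\mathfrak{L}=\mathfrak{sl}_n(\mathbb{F})$ (with $\ell=\mathrm{char}\,\mathbb{F}$) is an abelian Cartan subalgebra $H$ such that: (a) $\mathfrak{L}=\bigoplus_\alpha \mathfrak{L}_\alpha$ with $\mathfrak{L}_\alpha=\{x: [x,h]=\alpha(h)x\ \forall h\in H\}$ over linear functionals $\alpha$ on $H$ (roots); (b) for each root $\alpha\ne0$, $[\mathfrak{L}_\alpha,\mathfrak{L}_{-\alpha}]$ is one-dimensional; (c) for roots $\alpha,\beta$ with $\beta\neq0$, not all $\alpha+k\beta$ ($1\le k\le \ell-1$) are roots. The Killing form is $K(A,B)=2n\,\mathrm{Tr}(AB)$. A COD of $\mathfrak{sl}_n(\mathbb{F})$ is a vector space decomposition $\mathfrak{sl}_n(\mathbb{F})=H_0\oplus\cdots\oplus H_n$ into classical Cartan subalgebras that are pairwise orthogonal with respect to $K$. Two CODs are conjugate if there is a Lie algebra automorphism of $\mathfrak{sl}_n(\mathbb{F})$ mapping each component of the first decomposition onto exactly one component of the second. *)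

From HB Require Import structures.
From mathcomp Require Import all_boot all_order all_algebra.
Set Implicit Arguments. Unset Strict Implicit. Unset Printing Implicit Defensive.
Import Order.TTheory GRing.Theory Num.Theory.
Local Open Scope ring_scope.

Section LieDefs.
Variables (F : fieldType) (n : nat).
Local Notation M := 'M[F]_n.

Definition lie (x y : M) : M := x *m y - y *m x.

Definition in_sl (x : M) : Prop := \tr x = 0.

Definition killing (x y : M) : F := (2 * n)%:R * \tr (x *m y).

Definition inspan (P : M -> Prop) (w : M) : Prop :=
  exists (k : nat) (c : 'I_k -> F) (v : 'I_k -> M),
    (forall i, P (v i)) /\ w = \sum_(i < k) c i *: v i.

Definition one_dim (P : M -> Prop) : Prop :=
  exists z : M, z != 0 /\ forall w, inspan P w <-> exists c : F, w = c *: z.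

Definition subalg (H : {vspace M}) : Prop :=
  (forall x, x \in H -> in_sl x) /\
  (forall x y, x \in H -> y \in H -> lie x y \in H).

Definition lie_abelian (H : {vspace M}) : Prop :=
  forall x y, x \in H -> y \in H -> lie x y = 0.

(* nilpotent: the lower central series reaches 0, i.e. all iterated
   brackets [x_1,[x_2,...,[x_k,y]...]] of length k vanish *)
Definition lie_nilpotent (H : {vspace M}) : Prop :=
  exists k : nat, forall (xs : seq M) (y : M), size xs = k ->
    (forall x, x \in xs -> x \in H) -> y \in H -> foldr lie y xs = 0.

Definition self_normalizing (H : {vspace M}) : Prop :=
  forall x, in_sl x -> (forall h, h \in H -> lie x h \in H) -> x \in H.

Definition cartan (H : {vspace M}) : Prop :=
  subalg H /\ lie_nilpotent H /\ self_normalizing H.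

(* linear functionals on H, represented by functions M -> F that are linear
   on H; two such are identified when they agree on H *)
Definition lin_on (H : {vspace M}) (a : M -> F) : Prop :=
  forall (c : F) x y, x \in H -> y \in H -> a (c *: x + y) = c * a x + a y.

Definition eq_on (H : {vspace M}) (a b : M -> F) : Prop :=
  forall h, h \in H -> a h = b h.

Definition wspace (H : {vspace M}) (a : M -> F) (x : M) : Prop :=
  in_sl x /\ forall h, h \in H -> lie x h = a h *: x.

Definition root (H : {vspace M}) (a : M -> F) : Prop :=
  lin_on H a /\ exists x, x != 0 /\ wspace H a x.

(* (a): L = (+)_a L_a, direct sum over all linear functionals a on H *)
Definition root_decomp (H : {vspace M}) : Prop :=
  (forall x, in_sl x -> exists (k : nat) (al : 'I_k -> M -> F) (xs : 'I_k -> M),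
      (forall i, lin_on H (al i) /\ wspace H (al i) (xs i)) /\
      x = \sum_(i < k) xs i) /\
  (forall (k : nat) (al : 'I_k -> M -> F) (xs : 'I_k -> M),
      (forall i, lin_on H (al i)) ->
      (forall i j, i != j -> ~ eq_on H (al i) (al j)) ->
      (forall i, wspace H (al i) (xs i)) ->
      \sum_(i < k) xs i = 0 -> forall i, xs i = 0).

Definition cond_b (H : {vspace M}) : Prop :=
  forall a, root H a -> ~ eq_on H a (fun _ => 0) ->
    one_dim (fun w => exists x y, wspace H a x /\
                                  wspace H (fun h => - a h) y /\ w = lie x y).

Definition cond_c (l : nat) (H : {vspace M}) : Prop :=
  forall a b, root H a -> root H b -> ~ eq_on H b (fun _ => 0) ->
    ~ (forall k : nat, (1 <= k <= l - 1)%N -> root H (fun h => a h + k%:R * b h)).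

(* classical Cartan subalgebra, l = char F *)
Definition classical_cartan (l : nat) (H : {vspace M}) : Prop :=
  cartan H /\ lie_abelian H /\ root_decomp H /\ cond_b H /\ cond_c l H.

Definition COD (l : nat) (Hs : 'I_n.+1 -> {vspace M}) : Prop :=
  (forall i, classical_cartan l (Hs i)) /\
  (forall i j, i != j -> forall x y, x \in Hs i -> y \in Hs j -> killing x y = 0) /\
  (forall x, in_sl x <-> x \in (\sum_(i < n.+1) Hs i)%VS) /\
  directv (\sum_(i < n.+1) Hs i).

Definition lie_aut (phi : M -> M) : Prop :=
  (forall (c : F) x y, in_sl x -> in_sl y -> phi (c *: x + y) = c *: phi x + phi y) /\
  (forall x, in_sl x -> in_sl (phi x)) /\
  (forall x y, in_sl x -> in_sl y -> phi x = phi y -> x = y) /\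
  (forall y, in_sl y -> exists x, in_sl x /\ phi x = y) /\
  (forall x y, in_sl x -> in_sl y -> phi (lie x y) = lie (phi x) (phi y)).

Definition COD_conjugate (Hs Ks : 'I_n.+1 -> {vspace M}) : Prop :=
  exists phi, lie_aut phi /\
    exists f : 'I_n.+1 -> 'I_n.+1, forall i y,
      y \in Ks (f i) <-> exists x, x \in Hs i /\ phi x = y.

End LieDefs.

(* Over a field of characteristic not 2, a classical Cartan subalgebra of sl_2 is a
   line [F u] with [u] traceless and [u ^+ 2 = 1], and Killing orthogonality of two
   such lines means that their generators anticommute. A COD is thus given by three
   pairwise anticommuting involutions [a], [b], [c]; their product commutes with
   sl_2, hence is a scalar [z], and [(a b c) ^+ 2 = -1] gives [z ^+ 2 = -1].
   Conversely, if [z ^+ 2 = -1] and [a], [b] are anticommuting traceless involutions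
   (e.g. diag(1, -1) and the swap matrix), the lines through [a], [b] and [z a b]
   form a COD; condition (c) is where characteristic > 3 is used. Finally [1, a, b,
   a b] is a basis of 'M_2 with a fixed multiplication table, so the linear map
   matching the bases of two CODs is an automorphism conjugating them. *)

From Pilot Require Import Defs.
From HB Require Import structures.
From mathcomp Require Import all_boot all_order all_algebra.
From mathcomp Require Import ssrAC ring zify.
Set Implicit Arguments. Unset Strict Implicit. Unset Printing Implicit Defensive.
Import GRing.Theory.
Local Open Scope ring_scope.

Section LieMx.
Variables (F : fieldType) (n : nat).
Local Notation M := 'M[F]_n.
Implicit Types (x y : M) (H : {vspace M}) (al : M -> F).

Lemma lieZl (c : F) x y : lie (c *: x) y = c *: lie x y.
Proof. by rewrite /lie scalerBr -scalemxAl -scalemxAr. Qed.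

Lemma lieZr (c : F) x y : lie x (c *: y) = c *: lie x y.
Proof. by rewrite /lie scalerBr -scalemxAl -scalemxAr. Qed.

Lemma lie0l y : lie 0 y = 0.
Proof. by rewrite /lie mul0mx mulmx0 subrr. Qed.

Lemma lie_suml k (f : 'I_k -> M) y :
  lie (\sum_(i < k) f i) y = \sum_(i < k) lie (f i) y.
Proof. by rewrite /lie mulmx_suml mulmx_sumr -sumrB. Qed.

Lemma mxtrace_lie x y : \tr (lie x y) = 0.
Proof. by rewrite /lie linearB /= mxtrace_mulC subrr. Qed.

Lemma lin_on0 H al : lin_on H al -> al 0 = 0.
Proof.
move=> hl; have := hl 1 0 0 (mem0v _) (mem0v _).
rewrite scaler0 addr0 mul1r => e.
by apply: (addrI (al 0)); rewrite addr0 -e.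
Qed.

Lemma lin_onZ H al (c : F) x : lin_on H al -> x \in H -> al (c *: x) = c * al x.
Proof. by move=> hl hx; have := hl c x 0 hx (mem0v _); rewrite (lin_on0 hl) !addr0. Qed.

Lemma lin_onN H al : lin_on H al -> lin_on H (fun h => - al h).
Proof. by move=> hl c x y hx hy; rewrite hl // opprD mulrN. Qed.

Lemma lin_on_cst0 H : lin_on H (fun _ => 0).
Proof. by move=> c x y _ _; rewrite mulr0 addr0. Qed.

Lemma wspaceZ H al (c : F) x : wspace H al x -> wspace H al (c *: x).
Proof.
case=> tx hx; split; first by rewrite /in_sl mxtraceZ tx mulr0.
by move=> h hh; rewrite lieZl hx // !scalerA mulrC.
Qed.

End LieMx.

Lemma ord2P (i : 'I_2) : i = 0 \/ i = 1.
Proof. by case: i => [[|[|//]]] ?; [left | right]; apply: val_inj. Qed.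

Lemma ord3P (i : 'I_3) : [\/ i = 0, i = 1 | i = 2].
Proof.
by case: i => [[|[|[|//]]]] ?; [apply: Or31 | apply: Or32 | apply: Or33]; apply: val_inj.
Qed.

Lemma sum_ord2 (V : nmodType) (f : 'I_2 -> V) : \sum_(i < 2) f i = f 0 + f 1.
Proof. by rewrite !big_ord_recr big_ord0 /= add0r; congr (f _ + f _); apply: val_inj. Qed.

Lemma sum_ord3 (V : nmodType) (f : 'I_3 -> V) : \sum_(i < 3) f i = f 0 + f 1 + f 2.
Proof.
by rewrite !big_ord_recr big_ord0 /= add0r; congr (f _ + f _ + f _); apply: val_inj.
Qed.

Lemma sum_ord4 (V : nmodType) (f : 'I_4 -> V) :
  \sum_(i < 4) f i = f 0 + f 1 + f 2 + f 3.
Proof.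
rewrite !big_ord_recr big_ord0 /= add0r.
by congr (f _ + f _ + f _ + f _); apply: val_inj.
Qed.

Section Mx2.
Variable F : fieldType.
Local Notation M := 'M[F]_2.
Implicit Types (x y u w : M) (H : {vspace M}).

Lemma matrix2P (A B : M) :
  A 0 0 = B 0 0 -> A 0 1 = B 0 1 -> A 1 0 = B 1 0 -> A 1 1 = B 1 1 -> A = B.
Proof.
move=> h00 h01 h10 h11; apply/matrixP => i j.
by case: (ord2P i) => ->; case: (ord2P j) => ->.
Qed.

Lemma mxtrace2 (A : M) : \tr A = A 0 0 + A 1 1.
Proof. by rewrite /mxtrace sum_ord2. Qed.

Lemma mxtrace_1 : \tr (1 : M) = 2.
Proof. by rewrite mxtrace2 !mxE. Qed.

Lemma mxtrace_mulrC x y : \tr (x * y) = \tr (y * x).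
Proof. by rewrite -!mulmxE mxtrace_mulC. Qed.

Lemma lieE x y : lie x y = x * y - y * x.
Proof. by rewrite /lie mulmxE. Qed.

Lemma lin_on_mxtrace_mulr H u : lin_on H (fun h => \tr (h * u)).
Proof. by move=> c x y _ _; rewrite mulrDl -scalerAl mxtraceD mxtraceZ. Qed.

(* Polarization of Cayley-Hamilton [x ^+ 2 = - \det x] for traceless [x]. *)
Lemma sl2_anticommutator x y :
  \tr x = 0 -> \tr y = 0 -> x * y + y * x = \tr (x * y) *: 1.
Proof.
rewrite !mxtrace2 => hx hy.
have ex : x 1 1 = - x 0 0 by apply/eqP; rewrite -addr_eq0 addrC hx.
have ey : y 1 1 = - y 0 0 by apply/eqP; rewrite -addr_eq0 addrC hy.
apply: matrix2P; rewrite !mxE !sum_ord2 /= ex ey; ring.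
Qed.

Lemma mxtrace_delta01 : \tr (delta_mx 0 1 : M) = 0.
Proof. by rewrite mxtrace2 !mxE /= addr0. Qed.

Lemma mxtrace_delta10 : \tr (delta_mx 1 0 : M) = 0.
Proof. by rewrite mxtrace2 !mxE /= addr0. Qed.

Lemma delta01_neq0 : (delta_mx 0 1 : M) != 0.
Proof. by apply/eqP => /matrixP /(_ 0 1); rewrite !mxE /=; apply/eqP; exact: oner_neq0. Qed.

Lemma commute_deltas_scalar w :
  w * delta_mx 0 1 = delta_mx 0 1 * w -> w * delta_mx 1 0 = delta_mx 1 0 * w ->
  w = w 0 0 *: 1.
Proof.
move=> h01 h10.
have := congr1 (fun A : M => A 1 1) h01; have := congr1 (fun A : M => A 0 1) h01.
have := congr1 (fun A : M => A 0 0) h10.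
rewrite !mxE !sum_ord2 /= !mxE /= !(mul0r, mulr0, mulr1, mul1r, add0r, addr0).
by move=> e1 e2 e3; apply: matrix2P; rewrite !mxE /= ?mulr1 ?mulr0.
Qed.

Lemma commute_sl2_scalar w : (forall m : M, \tr m = 0 -> w * m = m * w) -> w = w 0 0 *: 1.
Proof.
move=> hw; apply: commute_deltas_scalar; apply: hw.
  exact: mxtrace_delta01.
exact: mxtrace_delta10.
Qed.

Definition anticomm_pair (a b : M) : Prop :=
  [/\ a * a = 1, b * b = 1, b * a = - (a * b), \tr a = 0 & \tr b = 0].

End Mx2.

Section CharNot2.
Variable F : fieldType.
Hypothesis h2 : (2 : F) != 0.
Local Notation M := 'M[F]_2.
Implicit Types (x y u : M).

Lemma four_neq0 : (4 : F) != 0.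
Proof. by rewrite (_ : 4 = 2 * 2) ?mulf_neq0 //; ring. Qed.

Lemma sl2_sqr x : \tr x = 0 -> x * x = (\tr (x * x) / 2) *: 1.
Proof.
move=> tx; have := sl2_anticommutator tx tx.
rewrite -mulr2n -scaler_nat => e.
by rewrite mulrC -scalerA -e scalerA mulVf // scale1r.
Qed.

Lemma killing_anticomm x y :
  \tr x = 0 -> \tr y = 0 -> killing x y = 0 -> y * x = - (x * y).
Proof.
move=> tx ty; rewrite /killing mulmxE => /eqP.
rewrite mulf_eq0 (negbTE four_neq0) /= => /eqP t0.
by have := sl2_anticommutator tx ty; rewrite t0 scale0r => /eqP; rewrite addrC addr_eq0 => /eqP.
Qed.

Lemma ad_eigenvector_halves x y (d mu : F) :
  x * x = d *: 1 -> y * x - x * y = mu *: y -> mu != 0 ->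
  [/\ x * y = - (mu / 2) *: y, y * x = (mu / 2) *: y & (mu / 2) ^+ 2 *: y = d *: y].
Proof.
move=> hx hyx hmu.
have e1 : y * x = x * y + mu *: y by rewrite -hyx addrC subrK.
have e2 : (mu + mu) *: (x * y) = - (mu * mu) *: y.
  have : y * (x * x) = (x * x) * y + ((mu + mu) *: (x * y) + (mu * mu) *: y).
    rewrite mulrA e1 mulrDl -mulrA e1 mulrDr !mulrA -!scalerAl -!scalerAr e1.
    by rewrite scalerDr scalerA scalerDl !addrA.
  rewrite hx -scalerAl -scalerAr mul1r mulr1 => /eqP.
  rewrite -subr_eq0 opprD addrA subrr add0r oppr_eq0 addr_eq0 => /eqP ->.
  by rewrite scaleNr.
have m2 : mu + mu != 0 by rewrite -mulr2n -mulr_natr mulf_neq0.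
have hxy : x * y = - (mu / 2) *: y.
  move: e2 => /(congr1 (fun v => (mu + mu)^-1 *: v)); rewrite !scalerA mulVf // scale1r => ->.
  by congr (_ *: _); field; rewrite h2.
split => //; first by rewrite e1 hxy -scalerDl; congr (_ *: _); field.
have : (x * x) * y = (mu / 2) ^+ 2 *: y.
  by rewrite -mulrA hxy -scalerAr hxy scalerA; congr (_ *: _); field.
by rewrite hx -scalerAl mul1r.
Qed.

Lemma lie_line_proportional x u (c : F) : \tr x = 0 -> \tr u = 0 -> u * u = 1 ->
  x * u - u * x = c *: u -> x = (\tr (x * u) / 2) *: u.
Proof.
move=> tx tu hu hc.
have e1 : x * u + x * u = c *: u + \tr (x * u) *: 1.
  by rewrite -hc -(sl2_anticommutator tx tu) addrACA addNr addr0.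
have e2 : x + x = c *: 1 + \tr (x * u) *: u.
  have := congr1 (fun v => v * u) e1.
  by rewrite /= !mulrDl -!mulrA hu !mulr1 -!scalerAl hu mul1r.
have c0 : c = 0.
  have := congr1 (@mxtrace _ _) e2.
  rewrite !mxtraceD !mxtraceZ tu mxtrace_1 mulr0 addr0 tx addr0 => /eqP.
  by rewrite eq_sym mulf_eq0 (negbTE h2) orbF => /eqP.
rewrite {1}(_ : x = 2^-1 *: (x + x)); last first.
  by rewrite -mulr2n -scaler_nat scalerA mulVf // scale1r.
by rewrite e2 c0 scale0r add0r scalerA mulrC.
Qed.

End CharNot2.

Section Quaternion.
Variables (F : fieldType) (a b : 'M[F]_2).
Hypotheses (h2 : (2 : F) != 0) (Pab : anticomm_pair a b).
Local Notation M := 'M[F]_2.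

Let ha : a * a = 1. Proof. by case: Pab. Qed.
Let hb : b * b = 1. Proof. by case: Pab. Qed.
Let hba : b * a = - (a * b). Proof. by case: Pab. Qed.
Let ta : \tr a = 0. Proof. by case: Pab. Qed.
Let tb : \tr b = 0. Proof. by case: Pab. Qed.

Definition quat (p q r s : F) : M := p *: 1 + q *: a + r *: b + s *: (a * b).

Lemma quat_congr p q r s p' q' r' s' :
  p = p' -> q = q' -> r = r' -> s = s' -> quat p q r s = quat p' q' r' s'.
Proof. by move=> -> -> -> ->. Qed.

Lemma quatD p q r s p' q' r' s' :
  quat p q r s + quat p' q' r' s' = quat (p + p') (q + q') (r + r') (s + s').
Proof. by rewrite /quat (AC (4*4) ((1*5)*(2*6)*(3*7)*(4*8))) !scalerDl. Qed.

Lemma quatZ c p q r s : c *: quat p q r s = quat (c * p) (c * q) (c * r) (c * s).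
Proof. by rewrite /quat !scalerDr !scalerA. Qed.

Lemma quatB p q r s p' q' r' s' :
  quat p q r s - quat p' q' r' s' = quat (p - p') (q - q') (r - r') (s - s').
Proof. by rewrite -scaleN1r quatZ quatD; apply: quat_congr; ring. Qed.

Lemma quat_a : a = quat 0 1 0 0.
Proof. by rewrite /quat !scale0r scale1r add0r !addr0. Qed.

Lemma quat_b : b = quat 0 0 1 0.
Proof. by rewrite /quat !scale0r scale1r !add0r !addr0. Qed.

Lemma quat_ab : a * b = quat 0 0 0 1.
Proof. by rewrite /quat !scale0r scale1r !add0r. Qed.

Lemma mulaba : a * b * a = - b.
Proof. by rewrite -mulrA hba mulrN mulrA ha mul1r. Qed.

Lemma mulbab : b * (a * b) = - a.
Proof. by rewrite mulrA hba mulNr -mulrA hb mulr1. Qed.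

Lemma mulabab : a * b * (a * b) = - 1.
Proof. by rewrite mulrA mulaba mulNr hb. Qed.

Lemma mula_quat p q r s : a * quat p q r s = quat q p s r.
Proof.
rewrite /quat !mulrDr -!scalerAr mulr1 ha mulrA ha mul1r.
by rewrite (AC 4 (2*1*4*3)).
Qed.

Lemma mulb_quat p q r s : b * quat p q r s = quat r (- s) p (- q).
Proof.
rewrite /quat !mulrDr -!scalerAr mulr1 hb hba mulbab !scalerN -!scaleNr.
by rewrite (AC 4 (3*4*1*2)).
Qed.

Lemma mulab_quat p q r s : (a * b) * quat p q r s = quat (- s) r (- q) p.
Proof.
rewrite /quat !mulrDr -!scalerAr mulr1 mulaba mulabab -mulrA hb mulr1 !scalerN -!scaleNr.
by rewrite (AC 4 (4*3*2*1)).
Qed.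

Lemma quatM p q r s p' q' r' s' :
  quat p q r s * quat p' q' r' s' =
  quat (p * p' + q * q' + r * r' - s * s') (p * q' + q * p' - r * s' + s * r')
       (p * r' + r * p' + q * s' - s * q') (p * s' + s * p' + q * r' - r * q').
Proof.
rewrite {1}/quat !mulrDl -!scalerAl mul1r mula_quat mulb_quat mulab_quat !quatZ !quatD.
by apply: quat_congr; ring.
Qed.

Lemma lie_quat p q r s p' q' r' s' :
  lie (quat p q r s) (quat p' q' r' s') =
  quat 0 ((s * r' - r * s') * 2) ((q * s' - s * q') * 2) ((q * r' - r * q') * 2).
Proof. by rewrite lieE !quatM quatB; apply: quat_congr; ring. Qed.

Lemma mxtrace_ab : \tr (a * b) = 0.
Proof.
have : \tr (a * b) + \tr (a * b) = 0 by rewrite {2}mxtrace_mulrC hba linearN subrr.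
by rewrite -mulr2n -mulr_natr => /eqP; rewrite mulf_eq0 (negbTE h2) orbF => /eqP.
Qed.

Lemma mxtrace_quat p q r s : \tr (quat p q r s) = p * 2.
Proof. by rewrite /quat !mxtraceD !mxtraceZ mxtrace_1 ta tb mxtrace_ab !mulr0 !addr0. Qed.

Lemma in_sl_quat p q r s : in_sl (quat p q r s) <-> p = 0.
Proof.
rewrite /in_sl mxtrace_quat.
by split => [/eqP | ->]; rewrite ?mul0r // mulf_eq0 (negbTE h2) orbF => /eqP.
Qed.

Definition coord1 (m : M) := \tr m / 2.
Definition coorda (m : M) := \tr (m * a) / 2.
Definition coordb (m : M) := \tr (m * b) / 2.
Definition coordab (m : M) := - \tr (m * (a * b)) / 2.

Lemma coord1_quat p q r s : coord1 (quat p q r s) = p.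
Proof. by rewrite /coord1 mxtrace_quat mulfK. Qed.

Lemma coorda_quat p q r s : coorda (quat p q r s) = q.
Proof. by rewrite /coorda [X in quat _ _ _ _ * X]quat_a quatM mxtrace_quat; field. Qed.

Lemma coordb_quat p q r s : coordb (quat p q r s) = r.
Proof. by rewrite /coordb [X in quat _ _ _ _ * X]quat_b quatM mxtrace_quat; field. Qed.

Lemma coordab_quat p q r s : coordab (quat p q r s) = s.
Proof. by rewrite /coordab [X in quat _ _ _ _ * X]quat_ab quatM mxtrace_quat; field. Qed.

Lemma quat_inj p q r s p' q' r' s' : quat p q r s = quat p' q' r' s' ->
  [/\ p = p', q = q', r = r' & s = s'].
Proof.
move=> e; split; [rewrite -(coord1_quat p q r s) -(coord1_quat p' q' r' s')
  | rewrite -(coorda_quat p q r s) -(coorda_quat p' q' r' s')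
  | rewrite -(coordb_quat p q r s) -(coordb_quat p' q' r' s')
  | rewrite -(coordab_quat p q r s) -(coordab_quat p' q' r' s')]; by rewrite e.
Qed.

Lemma quat0 : quat 0 0 0 0 = 0.
Proof. by rewrite /quat !scale0r !addr0. Qed.

Lemma quat_basis : basis_of fullv [:: 1; a; b; a * b].
Proof.
rewrite basisEfree subvf dimvf /= dim_matrix leqnn andbT.
apply/(freeP (X := in_tuple [:: 1; a; b; a * b])) => k hk.
have : quat (k 0) (k 1) (k 2) (k 3) = quat 0 0 0 0 by rewrite quat0 -hk sum_ord4.
case/quat_inj => k0 k1 k2 k3 i.
by case: i => [[|[|[|[|//]]]]] ?; [rewrite -k0 | rewrite -k1 | rewrite -k2 | rewrite -k3];
  congr k; apply: val_inj.
Qed.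

Lemma quat_surj m : exists p q r s, m = quat p q r s.
Proof.
have := memvf m; rewrite -(span_basis quat_basis) => /(coord_span (X := in_tuple _)) ->.
by rewrite sum_ord4; do 4 eexists.
Qed.

Lemma quat_coordE m : m = quat (coord1 m) (coorda m) (coordb m) (coordab m).
Proof.
have [p [q [r [s ->]]]] := quat_surj m.
by rewrite coord1_quat coorda_quat coordb_quat coordab_quat.
Qed.

End Quaternion.

Section CubicRoots.
Variable F : fieldType.
Implicit Types (l m : F).

(* Roots of [F a] take their values at [a] among the roots [0, 2, -2] of [t^3 - 4 t]. *)
Lemma cubic_roots_other m l :
  m ^+ 3 = 4 * m -> l ^+ 3 = 4 * l -> l != m -> l ^+ 2 + m * l + (m ^+ 2 - 4) = 0.
Proof.
move=> r0 r ne; have : (l - m) * (l ^+ 2 + m * l + (m ^+ 2 - 4)) = 0.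
  transitivity ((l ^+ 3 - 4 * l) - (m ^+ 3 - 4 * m)); first by ring.
  by rewrite r r0 !subrr.
by move/eqP; rewrite mulf_eq0 subr_eq0 (negbTE ne) => /eqP.
Qed.

Lemma cubic_roots_self m : (2 : F) != 0 ->
  m ^+ 3 = 4 * m -> m ^+ 2 + m * m + (m ^+ 2 - 4) != 0.
Proof.
move=> h2 r0; have h4 := four_neq0 h2.
have [->|ln0] := eqVneq m 0; first by rewrite expr0n mulr0 !add0r oppr_eq0.
have m2 : m ^+ 2 = 4 by apply: (mulfI ln0); rewrite -exprS r0 mulrC.
by rewrite -expr2 m2 (_ : 4 + 4 + (4 - 4) = 2 * 4 :> F) ?mulf_neq0 //; ring.
Qed.

End CubicRoots.

Section CartanLine.
Variables (F : fieldType) (a b : 'M[F]_2).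
Hypotheses (h2 : (2 : F) != 0) (Pab : anticomm_pair a b).
Local Notation M := 'M[F]_2.
Local Notation H := (<[a]>%VS : {vspace M}).
Local Notation quat := (quat a b).
Implicit Types (al be : M -> F).

Let ha : a * a = 1. Proof. by case: Pab. Qed.
Let ta : \tr a = 0. Proof. by case: Pab. Qed.

Lemma lie_line (c c' : F) : lie (c *: a) (c' *: a) = 0.
Proof. by rewrite lieZl lieZr lieE subrr !scaler0. Qed.

Lemma anticomm_pair_neq0 : a != 0.
Proof. by apply/eqP => a0; move: ha; rewrite a0 mul0r => /eqP; rewrite eq_sym oner_eq0. Qed.

Lemma wspace_line al y :
  lin_on H al -> \tr y = 0 -> lie y a = al a *: y -> wspace H al y.
Proof.
move=> hl ty hy; split => // h /vlineP [c ->].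
by rewrite lieZr hy scalerA (lin_onZ _ hl) ?memv_line.
Qed.

Lemma wspace_line_eigen al y : wspace H al y -> y * a - a * y = al a *: y.
Proof. by case=> _ /(_ a (memv_line a)); rewrite lieE. Qed.

Lemma eq_on_line al be : lin_on H al -> lin_on H be -> al a = be a -> eq_on H al be.
Proof.
move=> hal hbe e h /vlineP [c ->].
by rewrite (lin_onZ _ hal) ?(lin_onZ _ hbe) ?memv_line ?e.
Qed.

Lemma line_root_neq0 al : lin_on H al -> ~ eq_on H al (fun _ => 0) -> al a != 0.
Proof.
move=> hl hne; apply/eqP => m0; apply: hne.
by apply: eq_on_line => //; exact: lin_on_cst0.
Qed.

Lemma line_root_cubic al : Defs.root H al -> al a ^+ 3 = 4 * al a.
Proof.
case=> hl [x [xn0 hx]]; have [->|mun0] := eqVneq (al a) 0; first by rewrite expr0n mulr0.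
have [_ _ e] := ad_eigenvector_halves h2 (etrans ha (esym (scale1r 1)))
  (wspace_line_eigen hx) mun0.
have : ((al a / 2) ^+ 2 - 1) *: x = 0 by rewrite scalerBl e scale1r subrr.
move/eqP; rewrite scaler_eq0 (negbTE xn0) orbF subr_eq0 => /eqP e2.
have -> : al a ^+ 3 = al a * (al a / 2) ^+ 2 * 4 by field.
by rewrite e2 mulr1 mulrC.
Qed.

(* Applying [ad a] twice to [\sum_i xs i = 0] and combining with the quadratic
   of [cubic_roots_other] isolates the component [xs i0]. *)
Lemma line_root_vectors_indep (k : nat) (al : 'I_k -> M -> F) (xs : 'I_k -> M) :
  (forall i, lin_on H (al i)) ->
  (forall i j, i != j -> ~ eq_on H (al i) (al j)) ->
  (forall i, wspace H (al i) (xs i)) ->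
  \sum_(i < k) xs i = 0 -> forall i, xs i = 0.
Proof.
move=> hl hd hw hs i0; pose lam i := al i a.
have lam_cubic i : xs i != 0 -> lam i ^+ 3 = 4 * lam i.
  by move=> xn0; apply: (line_root_cubic (al := al i)); split; [exact: hl | exists (xs i)].
have ad_step (c : 'I_k -> F) :
    \sum_i c i *: xs i = 0 -> \sum_i (c i * lam i) *: xs i = 0.
  move=> e; transitivity (lie (\sum_i c i *: xs i) a); last by rewrite e lie0l.
  rewrite lie_suml; apply: eq_bigr => i _.
  by rewrite lieZl lieE (wspace_line_eigen (hw i)) scalerA.
have S0 : \sum_i 1 *: xs i = 0 by under eq_bigr do rewrite scale1r.
have S1 := ad_step _ S0; have S2 := ad_step _ S1.
pose q t := t ^+ 2 + lam i0 * t + (lam i0 ^+ 2 - 4).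
have Sq : \sum_i q (lam i) *: xs i = 0.
  rewrite (eq_bigr (fun i => (1 * lam i * lam i) *: xs i +
      lam i0 *: ((1 * lam i) *: xs i) + (lam i0 ^+ 2 - 4) *: (1 *: xs i))).
    by rewrite !big_split /= -!scaler_sumr S1 S2 hs !scaler0 !addr0.
  by move=> i _; rewrite !scalerA -!scalerDl /q; congr (_ *: _); ring.
apply/eqP; apply: contraT => x0n0.
move: Sq; rewrite (bigD1 i0) //= big1 ?addr0 => [/eqP|i ne].
  rewrite scaler_eq0 (negbTE x0n0) orbF.
  by rewrite (negbTE (cubic_roots_self h2 (lam_cubic _ x0n0))).
have [->|xn0] := eqVneq (xs i) 0; first by rewrite scaler0.
rewrite /q cubic_roots_other ?scale0r ?lam_cubic //.
by apply/eqP => e; apply: (hd _ _ ne); apply: eq_on_line.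
Qed.

Lemma lie_quat_a q r s : lie (quat 0 q r s) a = quat 0 0 (- (s * 2)) (- (r * 2)).
Proof. by rewrite [X in lie _ X](quat_a a b) (lie_quat Pab); apply: quat_congr; ring. Qed.

(* The root spaces of [F a] are [F a] for the root [0] and the lines through
   [b -+ a b] for the roots [+-2]. *)
Lemma line_root_decomposition x : in_sl x ->
  exists (k : nat) (al : 'I_k -> M -> F) (xs : 'I_k -> M),
    (forall i, lin_on H (al i) /\ wspace H (al i) (xs i)) /\ x = \sum_(i < k) xs i.
Proof.
rewrite /in_sl (quat_coordE h2 Pab x) (mxtrace_quat h2 Pab) => /eqP.
rewrite mulf_eq0 (negbTE h2) orbF => /eqP ->.
set q := coorda _ x; set r := coordb _ x; set s := coordab _ _ x.
exists 3%N, (fun i => nth (fun _ => 0)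
  [:: fun _ => 0; fun h => \tr (h * a); fun h => - \tr (h * a)] i).
exists (fun i => nth 0
  [:: quat 0 q 0 0; quat 0 0 ((r - s) / 2) ((s - r) / 2); quat 0 0 ((r + s) / 2) ((r + s) / 2)] i).
split; last by rewrite sum_ord3 /= !(quatD a b); apply: quat_congr; field.
have lin_tr : lin_on H (fun h => \tr (h * a)) := lin_on_mxtrace_mulr a.
have tr0 q' r' s' : \tr (quat 0 q' r' s') = 0 by rewrite (mxtrace_quat h2 Pab) mul0r.
move=> i; case: (ord3P i) => -> /=; split;
  try solve [exact: lin_on_cst0 | exact: lin_tr | exact: lin_onN];
  apply: wspace_line; try solve [exact: lin_on_cst0 | exact: lin_tr | exact: lin_onN | exact: tr0];
  by rewrite /= lie_quat_a ?ha ?mxtrace_1 (quatZ a b); apply: quat_congr; field.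
Qed.

Lemma line_lie_opposite_roots al x y : al a != 0 ->
  wspace H al x -> wspace H (fun h => - al h) y -> lie x y = (\tr (lie x y * a) / 2) *: a.
Proof.
move=> mun0 hx hy.
apply: (lie_line_proportional h2 (c := 0)) => //; first exact: mxtrace_lie.
have ha1 : a * a = 1 *: 1 by rewrite ha scale1r.
have nmun0 : - al a != 0 by rewrite oppr_eq0.
have [ax xa _] := ad_eigenvector_halves h2 ha1 (wspace_line_eigen hx) mun0.
have [ay ya _] := ad_eigenvector_halves h2 ha1 (wspace_line_eigen hy) nmun0.
rewrite lieE mulrBl mulrBr -!mulrA ya xa !mulrA ax ay.
by rewrite -!scalerAl -!scalerAr mulNr !scaleNr !opprK subrr scale0r.
Qed.

Lemma line_root_half al : Defs.root H al -> al a != 0 -> (al a / 2) ^+ 2 = 1.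
Proof.
move=> hr mun0; apply: (mulfI mun0); rewrite mulr1.
have -> : al a * (al a / 2) ^+ 2 = al a ^+ 3 / 4 by field; rewrite ?four_neq0 ?h2.
by rewrite line_root_cubic // [4 * _]mulrC mulfK // four_neq0.
Qed.

Lemma line_root_vector al (s : F) : lin_on H al -> s ^+ 2 = 1 -> al a = s * 2 ->
  wspace H al (quat 0 0 1 (- s)).
Proof.
move=> hl s2 e; apply: wspace_line => //; first by rewrite (mxtrace_quat h2 Pab) mul0r.
rewrite lie_quat_a e (quatZ a b); apply: quat_congr; rewrite ?mulr0 //.
  by rewrite mulNr opprK mulr1.
by rewrite mulrN mulrAC -expr2 s2 mul1r.
Qed.

Lemma line_cond_b : cond_b H.
Proof.
move=> al hr hne; have hl := hr.1; set s := al a / 2.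
have mun0 := line_root_neq0 hl hne.
have s2 : s ^+ 2 = 1 := line_root_half hr mun0.
have emu : al a = s * 2 by rewrite /s mulfVK.
clearbody s.
exists a; split; first exact: anticomm_pair_neq0.
move=> w; split.
  move=> [k [c [v [hv ->]]]]; exists (\sum_(i < k) c i * (\tr (v i * a) / 2)).
  rewrite scaler_suml; apply: eq_bigr => i _.
  have [x [y [hx [hy ev]]]] := hv i.
  by rewrite {1}ev (line_lie_opposite_roots mun0 hx hy) -ev scalerA.
move=> [c ->]; exists 1%N, (fun _ => 1), (fun _ => c *: a).
split; last by rewrite big_ord1 scale1r.
(* [lie (b - s a b) (b + s a b) = -4 s a] with [s ^+ 2 = 1]. *)
move=> _; exists ((- (c * s) / 4) *: quat 0 0 1 (- s)), (quat 0 0 1 s); split.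
  exact/wspaceZ/(line_root_vector hl s2 emu).
split.
  rewrite -[s in quat _ _ _ s]opprK; apply: line_root_vector; rewrite ?sqrrN //.
    exact: lin_onN.
  by rewrite emu mulNr.
rewrite lieZl (lie_quat Pab) (quatZ a b) {1}(quat_a a b) (quatZ a b).
have h4 := four_neq0 h2.
apply: quat_congr; [by field | | by field | by field].
by rewrite -[X in c * X = _]s2; field.
Qed.

(* The third finite difference of [t |-> t^3 - 4 t] is the constant [6 b^3]. *)
Lemma line_cond_c (l : nat) : (3 : F) != 0 -> (4 < l)%N -> cond_c l H.
Proof.
move=> h3 hl4 a1 b1 hra hrb hne hall.
have bn0 := line_root_neq0 hrb.1 hne.
have rv k : (1 <= k <= 4)%N -> (a1 a + k%:R * b1 a) ^+ 3 = 4 * (a1 a + k%:R * b1 a).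
  by move=> hk; apply: (line_root_cubic (hall k _)); lia.
have : 6 * b1 a ^+ 3 = 0.
  rewrite (_ : 6 * b1 a ^+ 3 =
    ((a1 a + 4%:R * b1 a) ^+ 3 - 4 * (a1 a + 4%:R * b1 a))
    - 3 * ((a1 a + 3%:R * b1 a) ^+ 3 - 4 * (a1 a + 3%:R * b1 a))
    + 3 * ((a1 a + 2%:R * b1 a) ^+ 3 - 4 * (a1 a + 2%:R * b1 a))
    - ((a1 a + 1%:R * b1 a) ^+ 3 - 4 * (a1 a + 1%:R * b1 a))); last by ring.
  by rewrite !rv // !subrr !mulr0 subrr addr0 subrr.
move/eqP; rewrite mulf_eq0 expf_eq0 /= (negbTE bn0) orbF (_ : 6 = 2 * 3 :> F); last by ring.
by rewrite mulf_eq0 (negbTE h2) (negbTE h3).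
Qed.

Lemma line_classical_cartan (l : nat) : (3 : F) != 0 -> (4 < l)%N -> classical_cartan l H.
Proof.
move=> h3 hl4; split; last split; last split; last split.
- split; last split.
  + split; first by move=> x /vlineP [c ->]; rewrite /in_sl mxtraceZ ta mulr0.
    by move=> x y /vlineP [c ->] /vlineP [c' ->]; rewrite lie_line mem0v.
  + exists 1%N => [[|x [|//]]] //= y _ hx /vlineP [c' ->].
    by have /vlineP [c ->] := hx x (mem_head _ _); rewrite lie_line.
  + move=> x tx hn; have /vlineP [c hc] := hn a (memv_line a).
    by rewrite (lie_line_proportional h2 (c := c) tx ta ha) -?lieE // memvZ ?memv_line.
- by move=> x y /vlineP [c ->] /vlineP [c' ->]; rewrite lie_line.
- by split; [exact: line_root_decomposition | exact: line_root_vectors_indep].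
- exact: line_cond_b.
- exact: line_cond_c.
Qed.

End CartanLine.

Section CartanComponents.
Variable F : fieldType.
Hypothesis h2 : (2 : F) != 0.
Local Notation M := 'M[F]_2.
Implicit Types (x y u : M) (H : {vspace M}).

Lemma self_normalizing_neq0 H : self_normalizing H -> H != 0%VS.
Proof.
move=> hsn; apply/eqP => H0.
have : delta_mx 0 1 \in H.
  apply: hsn; first exact: mxtrace_delta01.
  by move=> h; rewrite H0 memv0 => /eqP ->; rewrite lieE mulr0 mul0r subrr mem0v.
by rewrite H0 memv0 (negbTE (delta01_neq0 F)).
Qed.

Lemma sl2_noncentral x : \tr x = 0 -> x != 0 -> exists2 e : M, \tr e = 0 & lie e x != 0.
Proof.
move=> tx xn0.
have [h01|] := eqVneq (lie (delta_mx 0 1) x) 0; last by exists (delta_mx 0 1); rewrite ?mxtrace_delta01.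
have [h10|] := eqVneq (lie (delta_mx 1 0) x) 0; last by exists (delta_mx 1 0); rewrite ?mxtrace_delta10.
move: h01 h10; rewrite !lieE => /eqP; rewrite subr_eq0 => /eqP h01 /eqP.
rewrite subr_eq0 => /eqP /esym /(commute_deltas_scalar (esym h01)) ex.
move: tx xn0; rewrite ex mxtraceZ mxtrace_1 => /eqP.
by rewrite mulf_eq0 (negbTE h2) orbF => /eqP ->; rewrite scale0r eqxx.
Qed.

Lemma classical_cartan_root_vector l H x : classical_cartan l H -> x \in H -> x != 0 ->
  exists y (mu : F), [/\ y != 0, mu != 0 & y * x - x * y = mu *: y].
Proof.
move=> [[[hsub _] _] [_ [[hdec _] _]]] xH xn0.
have [e te he] := sl2_noncentral (hsub x xH) xn0.
have [k [al [xs [hw hs]]]] := hdec e te.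
have [i hi] : exists i, lie (xs i) x != 0.
  apply/existsP; apply: contraNT he => /existsPn hn.
  by rewrite hs lie_suml big1 // => i _; apply/eqP; move: (hn i); rewrite negbK.
have [_ hwi] := (hw i).2; exists (xs i), (al i x); split.
- by apply: contraNneq hi => ->; rewrite lie0l.
- by apply: contraNneq hi => m0; rewrite hwi // m0 scale0r.
- by rewrite -lieE hwi.
Qed.

(* A root vector for [x] forces [x ^+ 2] to be a nonzero square times [1]; rescaling
   gives an involution. *)
Lemma classical_cartan_line l H : classical_cartan l H ->
  exists u, [/\ \tr u = 0, u * u = 1 & forall h, h \in H <-> exists k, h = k *: u].
Proof.
move=> cH; have [[[hsub _] [_ hsn]] [hab _]] := cH.
pose x := vpick H; have xH : x \in H := memv_pick H.
have xn0 : x != 0 by rewrite vpick0 self_normalizing_neq0.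
have tx : \tr x = 0 := hsub x xH.
have [y [mu [yn0 mun0 hyx]]] := classical_cartan_root_vector cH xH xn0.
have hxx := sl2_sqr h2 tx.
have [_ _ e] := ad_eigenvector_halves h2 hxx hyx mun0.
have hd : (mu / 2) ^+ 2 = \tr (x * x) / 2.
  apply/eqP; rewrite -subr_eq0; apply/eqP.
  have : ((mu / 2) ^+ 2 - \tr (x * x) / 2) *: y = 0 by rewrite scalerBl e subrr.
  by move/eqP; rewrite scaler_eq0 (negbTE yn0) orbF => /eqP.
have sn0 : mu / 2 != 0 by rewrite mulf_neq0 // invr_eq0.
set u := (mu / 2)^-1 *: x.
have tu : \tr u = 0 by rewrite mxtraceZ tx mulr0.
have uu : u * u = 1.
  by rewrite -scalerAl -scalerAr hxx !scalerA -hd -expr2 -exprMn mulVf // expr1n scale1r.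
exists u; split => // h; split => [hh | [k ->]]; last by rewrite !memvZ.
exists (\tr (h * u) / 2); apply: (lie_line_proportional h2 (c := 0)) => //; first exact: hsub.
by rewrite scale0r -lieE hab // memvZ.
Qed.

End CartanComponents.

Section CODStructure.
Variable F : fieldType.
Hypothesis h2 : (2 : F) != 0.
Local Notation M := 'M[F]_2.
Implicit Types (a b c : M) (Hs : 'I_3 -> {vspace M}).

Lemma anticomm_triple a b c : a * a = 1 -> b * b = 1 -> c * c = 1 ->
  b * a = - (a * b) -> c * a = - (a * c) -> c * b = - (b * c) ->
  [/\ a * b * c * a = a * (a * b * c), a * b * c * b = b * (a * b * c),
      a * b * c * c = c * (a * b * c) & a * b * c * (a * b * c) = - 1].
Proof.
move=> ha hb hc hba hca hcb.
have ra y : a * (a * y) = y by rewrite mulrA ha mul1r.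
have rb y : b * (b * y) = y by rewrite mulrA hb mul1r.
have rc y : c * (c * y) = y by rewrite mulrA hc mul1r.
have rba y : b * (a * y) = - (a * (b * y)) by rewrite mulrA hba mulNr mulrA.
have rca y : c * (a * y) = - (a * (c * y)) by rewrite mulrA hca mulNr mulrA.
have rcb y : c * (b * y) = - (b * (c * y)) by rewrite mulrA hcb mulNr mulrA.
by split; rewrite -!mulrA;
  rewrite ?(ra, rb, rc, rba, rca, rcb, ha, hb, hc, hba, hca, hcb, mulrN, mulNr, opprK).
Qed.

Lemma cod_units l Hs : COD l Hs ->
  exists u : 'I_3 -> M, [/\ forall i, \tr (u i) = 0, forall i, u i * u i = 1,
    forall i h, h \in Hs i <-> exists k, h = k *: u i &
    forall i j, i != j -> u j * u i = - (u i * u j)].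
Proof.
move=> [hC [hK _]].
have [u hu] := fin_all_exists (fun i => classical_cartan_line h2 (hC i)).
exists u; split; try by move=> i; have [] := hu i.
move=> i j ne; have [ti _ Hi] := hu i; have [tj _ Hj] := hu j.
apply: killing_anticomm => //; apply: (hK _ _ ne); [apply/Hi | apply/Hj];
  by exists 1; rewrite scale1r.
Qed.

(* The product of the three units is central, hence a scalar [z] with [z ^+ 2 = -1]. *)
Lemma cod_anticomm_pair l Hs : COD l Hs ->
  exists a b (z : F), [/\ anticomm_pair a b, z * z = -1,
    forall h, h \in Hs 0 <-> exists k, h = k *: a,
    forall h, h \in Hs 1 <-> exists k, h = k *: b &
    forall h, h \in Hs 2 <-> exists k, h = k *: (a * b)].
Proof.
move=> cod; have [_ [_ [hS _]]] := cod.
have [u [tu uu memHs anti]] := cod_units cod.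
have [wa wb wc ww] := anticomm_triple (uu 0) (uu 1) (uu 2)
  (anti 0 1 isT) (anti 0 2 isT) (anti 1 2 isT).
set w := u 0 * u 1 * u 2 in wa wb wc ww.
have wcomm m : \tr m = 0 -> w * m = m * w.
  move=> tm; have /memv_sumP [vs hvs ->] : m \in (\sum_(i < 3) Hs i)%VS by apply/hS.
  rewrite mulr_sumr mulr_suml; apply: eq_bigr => i _.
  have [k ->] := (memHs i (vs i)).1 (hvs i isT).
  by rewrite -scalerAr -scalerAl; case: (ord3P i) => ->; rewrite ?wa ?wb ?wc.
set z := w 0 0; have wz : w = z *: 1 := commute_sl2_scalar wcomm.
have zz : z * z = -1.
  have := congr1 (fun A : M => A 0 0) ww.
  by rewrite wz -scalerAl -scalerAr mul1r scalerA !mxE /= mulr1.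
have sqr_eqN1_neq0 : - z != 0.
  by apply: contra_eq_neq zz => /eqP; rewrite oppr_eq0 => /eqP ->; rewrite mul0r eq_sym oppr_eq0 oner_neq0.
have ec : u 2 = (- z) *: (u 0 * u 1).
  have -> : u 2 = (u 1 * u 0) * w.
    by rewrite /w !mulrA -(mulrA _ (u 0) (u 0)) uu mulr1 uu mul1r.
  by rewrite wz -scalerAr mulr1 (anti 0 1 isT) scalerN scaleNr.
exists (u 0), (u 1), z; split => //; try exact: memHs.
  by split; rewrite ?tu ?uu ?(anti 0 1 isT).
move=> h; rewrite memHs ec; split=> [[k ->] | [k ->]].
  by exists (k * - z); rewrite scalerA.
by exists (k / - z); rewrite scalerA mulfVK.
Qed.

End CODStructure.

Section QuatMap.
Variables (F : fieldType) (a b a' b' : 'M[F]_2).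
Hypotheses (h2 : (2 : F) != 0) (Pab : anticomm_pair a b) (Pab' : anticomm_pair a' b').
Local Notation M := 'M[F]_2.

Definition quat_map (m : M) : M :=
  quat a' b' (coord1 m) (coorda a m) (coordb b m) (coordab a b m).

Lemma quat_map_quat p q r s : quat_map (quat a b p q r s) = quat a' b' p q r s.
Proof.
by rewrite /quat_map (coord1_quat h2 Pab) (coorda_quat h2 Pab) (coordb_quat h2 Pab)
  (coordab_quat h2 Pab).
Qed.

(* [a, b] and [a', b'] obey the same multiplication table [quatM]. *)
Lemma quat_map_lie_aut : lie_aut quat_map.
Proof.
have [qs qs'] := (quat_surj h2 Pab, quat_surj h2 Pab').
split; [|split; [|split; [|split]]].
- move=> c x y _ _; have [p [q [r [s ->]]]] := qs x; have [p' [q' [r' [s' ->]]]] := qs y.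
  by rewrite quatZ quatD !quat_map_quat quatZ quatD.
- move=> x; have [p [q [r [s ->]]]] := qs x.
  by rewrite quat_map_quat !(in_sl_quat h2 Pab, in_sl_quat h2 Pab').
- move=> x y _ _; have [p [q [r [s ->]]]] := qs x; have [p' [q' [r' [s' ->]]]] := qs y.
  by rewrite !quat_map_quat => /(quat_inj h2 Pab') [-> -> -> ->].
- move=> y; have [p [q [r [s ->]]]] := qs' y => hy.
  exists (quat a b p q r s); rewrite quat_map_quat; split => //.
  by apply/(in_sl_quat h2 Pab); move/(in_sl_quat h2 Pab'): hy.
- move=> x y _ _; have [p [q [r [s ->]]]] := qs x; have [p' [q' [r' [s' ->]]]] := qs y.
  by rewrite (lie_quat Pab) !quat_map_quat (lie_quat Pab').
Qed.

Lemma quat_map_line (u u' : M) (U V : {vspace M}) :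
  (forall k, quat_map (k *: u) = k *: u') ->
  (forall h, h \in U <-> exists k, h = k *: u) -> (forall h, h \in V <-> exists k, h = k *: u') ->
  forall y, y \in V <-> exists x, x \in U /\ quat_map x = y.
Proof.
move=> hf hP hQ y; rewrite hQ; split => [[k ->] | [x [/hP [k ->] <-]]]; last by exists k.
by exists (k *: u); split; [apply/hP; exists k |].
Qed.

Lemma quat_mapZa k : quat_map (k *: a) = k *: a'.
Proof. by rewrite (quat_a a b) quatZ quat_map_quat -quatZ -quat_a. Qed.

Lemma quat_mapZb k : quat_map (k *: b) = k *: b'.
Proof. by rewrite (quat_b a b) quatZ quat_map_quat -quatZ -quat_b. Qed.

Lemma quat_mapZab k : quat_map (k *: (a * b)) = k *: (a' * b').
Proof. by rewrite (quat_ab a b) quatZ quat_map_quat -quatZ -quat_ab. Qed.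

End QuatMap.

Lemma cod_conjugate (F : fieldType) (l : nat) (Hs Ks : 'I_3 -> {vspace 'M[F]_2}) :
  (2 : F) != 0 -> COD l Hs -> COD l Ks -> COD_conjugate Hs Ks.
Proof.
move=> h2 cH cK.
have [a [b [z [Pab _ H0 H1 H2]]]] := cod_anticomm_pair h2 cH.
have [a' [b' [z' [Pab' _ K0 K1 K2]]]] := cod_anticomm_pair h2 cK.
exists (quat_map a b a' b'); split; first exact: quat_map_lie_aut.
exists id => i y /=; case: (ord3P i) => ->.
- exact: (quat_map_line (quat_mapZa a' b' h2 Pab) H0 K0).
- exact: (quat_map_line (quat_mapZb a' b' h2 Pab) H1 K1).
- exact: (quat_map_line (quat_mapZab a' b' h2 Pab) H2 K2).
Qed.

Section CODOfPair.
Variables (F : fieldType) (a b : 'M[F]_2) (z : F).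
Hypotheses (h2 : (2 : F) != 0) (Pab : anticomm_pair a b) (zz : z * z = -1).
Local Notation M := 'M[F]_2.

Lemma anticomm_pair_sym : anticomm_pair b a.
Proof. by case: Pab => ha hb hba ta tb; split => //; rewrite hba opprK. Qed.

Lemma anticomm_pair_third : anticomm_pair (z *: (a * b)) a.
Proof.
have [ha hb hba ta tb] := Pab; split => //.
- by rewrite -scalerAl -scalerAr scalerA zz (mulabab Pab) scaleN1r opprK.
- rewrite -scalerAl -scalerAr -scalerN; congr (_ *: _).
  by rewrite (mulaba Pab) opprK mulrA ha mul1r.
- by rewrite mxtraceZ (mxtrace_ab h2 Pab) mulr0.
Qed.

Definition pair_unit (i : 'I_3) : M := nth 0 [:: a; b; z *: (a * b)] i.

Lemma pair_unit_quat0 : pair_unit 0 = quat a b 0 1 0 0.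
Proof. exact: quat_a. Qed.

Lemma pair_unit_quat1 : pair_unit 1 = quat a b 0 0 1 0.
Proof. exact: quat_b. Qed.

Lemma pair_unit_quat2 : pair_unit 2 = quat a b 0 0 0 z.
Proof. by rewrite /pair_unit /= (quat_ab a b) quatZ; apply: quat_congr; ring. Qed.

Lemma sqr_eqN1_neq0 : z != 0.
Proof. by apply: contra_eq_neq zz => ->; rewrite mul0r eq_sym oppr_eq0 oner_neq0. Qed.

Lemma mxtrace_pair_unit i : \tr (pair_unit i) = 0.
Proof.
by case: (ord3P i) => ->; rewrite ?pair_unit_quat0 ?pair_unit_quat1 ?pair_unit_quat2
  (mxtrace_quat h2 Pab) mul0r.
Qed.

Lemma mxtrace_pair_unit_mul i j : i != j -> \tr (pair_unit i * pair_unit j) = 0.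
Proof.
case: (ord3P i) => ->; case: (ord3P j) => -> // _;
  by rewrite ?pair_unit_quat0 ?pair_unit_quat1 ?pair_unit_quat2 (quatM Pab)
    (mxtrace_quat h2 Pab); ring.
Qed.

Lemma pair_units_span x : in_sl x -> x \in (\sum_(i < 3) <[pair_unit i]>)%VS.
Proof.
move=> hx; have [p [q [r [s ex]]]] := quat_surj h2 Pab x.
have p0 : p = 0 by move: hx; rewrite ex => /(in_sl_quat h2 Pab).
apply/memv_sumP; exists (fun i : 'I_3 => nth 0 [:: q *: pair_unit 0; r *: pair_unit 1;
  (s / z) *: pair_unit 2] i).
  by move=> i _; case: (ord3P i) => ->; rewrite memvZ // memv_line.
by rewrite sum_ord3 /= ex p0 scalerA mulfVK ?sqr_eqN1_neq0 // /quat scale0r add0r.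
Qed.

Lemma pair_units_independent (vs : 'I_3 -> M) :
  (forall i, vs i \in <[pair_unit i]>%VS) -> \sum_(i < 3) vs i = 0 -> forall i, vs i = 0.
Proof.
move=> hvs hs i.
have [k0 e0] := vlineP _ _ (hvs 0).
have [k1 e1] := vlineP _ _ (hvs 1).
have [k2 e2] := vlineP _ _ (hvs 2).
have : quat a b 0 k0 k1 (k2 * z) = quat a b 0 0 0 0.
  by rewrite quat0 -hs sum_ord3 e0 e1 e2 /= scalerA /quat scale0r add0r.
case/(quat_inj h2 Pab) => _ k00 k10 /eqP; rewrite mulf_eq0 (negbTE sqr_eqN1_neq0) orbF => /eqP k20.
by case: (ord3P i) => ->; rewrite ?e0 ?e1 ?e2 ?k00 ?k10 ?k20 scale0r.
Qed.

Lemma cod_of_anticomm_pair l : (3 : F) != 0 -> (4 < l)%N ->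
  COD l (fun i => <[pair_unit i]>%VS).
Proof.
move=> h3 hl; split; [|split; [|split]].
- move=> i; case: (ord3P i) => ->.
  + exact: (line_classical_cartan h2 Pab h3 hl).
  + exact: (line_classical_cartan h2 anticomm_pair_sym h3 hl).
  + exact: (line_classical_cartan h2 anticomm_pair_third h3 hl).
- move=> i j ne x y /vlineP [k ->] /vlineP [k' ->].
  by rewrite /killing mulmxE -scalerAl -scalerAr !mxtraceZ mxtrace_pair_unit_mul // !mulr0.
- move=> x; split; first exact: pair_units_span.
  move/memv_sumP => [vs hvs ->]; rewrite /in_sl linear_sum big1 // => i _.
  by have /vlineP [k ->] := hvs i isT; rewrite linearZ /= mxtrace_pair_unit mulr0.
- apply/directv_sum_independent => vs hvs hs i _.
  by apply: pair_units_independent hs i => j; apply: hvs.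
Qed.

End CODOfPair.

Section Pauli.
Variable F : fieldType.

Definition pauli_z : 'M[F]_2 := \matrix_(i, j) (if i == j then (if i == 0 then 1 else -1) else 0).
Definition pauli_x : 'M[F]_2 := \matrix_(i, j) (if i == j then 0 else 1).

Lemma pauli_anticomm_pair : anticomm_pair pauli_z pauli_x.
Proof.
by split; try apply: matrix2P; rewrite ?mxtrace2 !mxE ?sum_ord2 /= ?mxE /=; ring.
Qed.

End Pauli.

Lemma prim_root4_of_sqr_eqN1 (F : fieldType) (z : F) : (2 : F) != 0 -> z * z = -1 ->
  4.-primitive_root z.
Proof.
move=> h2 zz; have n1 : (1 : F) != -1.
  by apply: contra h2 => /eqP e; rewrite -[2]/(1 + 1 : F) {1}e addNr.
have z2 : z ^+ 2 = -1 by rewrite expr2.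
apply/andP; split => //; apply/forallP => -[[|[|[|[|//]]]] hi]; rewrite unity_rootE /=;
  apply/eqP.
- by rewrite expr1; apply/negbTE/eqP => e; move: z2; rewrite e expr1n => /eqP; rewrite (negbTE n1).
- by rewrite z2 eq_sym (negbTE n1).
- rewrite exprS z2 mulrN1; apply/negbTE/eqP => /eqP; rewrite eqr_oppLR => /eqP e.
  by move: z2; rewrite e sqrrN expr1n => /eqP; rewrite (negbTE n1).
- by rewrite (exprM z 2 2) z2 sqrrN expr1n !eqxx.
Qed.

Lemma sqr_eqN1_of_prim_root4 (F : fieldType) (z : F) : 4.-primitive_root z -> z * z = -1.
Proof.
move=> pz; have z4 : z ^+ 4 = 1 := prim_expr_order pz.
have z2 : z ^+ 2 != 1 by rewrite -(expr0 z) (eq_prim_root_expr pz).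
have : (z ^+ 2 - 1) * (z ^+ 2 + 1) = 0.
  by rewrite -subr_sqr -exprM z4 expr1n subrr.
by move/eqP; rewrite mulf_eq0 subr_eq0 (negbTE z2) /= addr_eq0 -expr2 => /eqP.
Qed.

Theorem theorem3p2 (F : fieldType) (p : nat)
  (hchar : p \in [pchar F]) (hp3 : (3 < p)%N) :
  ((exists Hs : 'I_3 -> {vspace 'M[F]_2}, COD p Hs) /\
   (forall Hs Ks : 'I_3 -> {vspace 'M[F]_2},
      COD p Hs -> COD p Ks -> COD_conjugate Hs Ks))
  <-> (exists z : F, 4.-primitive_root z).
Proof.
have small_neq0 n : (0 < n < p)%N -> (n%:R : F) != 0.
  by case/andP => n0 np; rewrite -(dvdn_pcharf hchar) gtnNdvd.
have h2 : (2 : F) != 0 by apply: small_neq0; lia.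
have h3 : (3 : F) != 0 by apply: small_neq0; lia.
have hp5 : (4 < p)%N.
  rewrite ltn_neqAle hp3 andbT; apply/eqP => p4.
  by move: (pcharf_prime hchar); rewrite -p4.
split => [[[Hs cH] _] | [z /sqr_eqN1_of_prim_root4 zz]].
  have [a [b [z [_ zz _ _ _]]]] := cod_anticomm_pair h2 cH.
  by exists z; apply: prim_root4_of_sqr_eqN1.
split; last by move=> Hs Ks; apply: cod_conjugate.
exists (fun i => <[pair_unit (pauli_z F) (pauli_x F) z i]>%VS).
exact: (cod_of_anticomm_pair h2 (pauli_anticomm_pair F) zz h3 hp5).
Qed.
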